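(* Let $\ell\in\mathbb{F}$ and $\lambda\in(\widehat{\mathfrak h}_+)^*$. Then $J(\ell,\lambda)$ is an ideal of the vertex algebra $V_{\widehat{\mathfrak h}}(\ell,0)$ if and only if $\lambda_n(u)=0$ for all $u\in\mathfrak h$ and all integers $n\ge2$.
   Context: Let $p$ be a prime and $\mathbb{F}$ a field of characteristic $p$. Integers, and binomial coefficients $\binom{n}{k}=\frac{n(n-1)\cdots(n-k+1)}{k!}$ for $n\in\mathbb{Z}$, $k\in\mathbb{N}$, are viewed as elements of the prime subfield of $\mathbb{F}$. We write $\mathbb{Z}_+$ for the positive integers. <b>Formal calculus.</b> For every $n\in\mathbb{Z}$ set $(x+y)^n=\sum_{k\ge0}\binom{n}{k}x^{n-k}y^k$, and let $\delta(x)=\sum_{n\in\mathbb{Z}}x^n$. <b>Vertex algebras.</b> A vertex algebra over $\mathbb{F}$ is a vector space $V$ with a vector $\mathbf 1$ and a linear map $$Y(\cdot,x):V\to(\mathrm{End}\,V)[[x,x^{-1}]],\qquad v\mapsto Y(v,x)=\sum_{n\in\mathbb{Z}}v_nx^{-n-1},$$ satisfying the following conditions for all $u,v\in V$: <ul> <li>$u_nv=0$ for $n\gg0$;</li> <li>$Y(\mathbf 1,x)=\mathrm{id}_V$;</li> <li>$Y(v,x)\mathbf 1\in V[[x]]$ and its constant term is $v$;</li> <li>the Jacobi identity $$x_0^{-1}\delta\!\left(\tfrac{x_1-x_2}{x_0}\right)Y(u,x_1)Y(v,x_2)-x_0^{-1}\delta\!\left(\tfrac{x_2-x_1}{-x_0}\right)Y(v,x_2)Y(u,x_1)=x_2^{-1}\delta\!\left(\tfrac{x_1-x_0}{x_2}\right)Y(Y(u,x_0)v,x_2).$$</li>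 </ul> An ideal of $V$ is a subspace $I$ with $u_nv\in I$ and $v_nu\in I$ for all $u\in V$, $v\in I$, $n\in\mathbb{Z}$. <b>Heisenberg setup.</b> Let $\mathfrak h$ be a finite-dimensional $\mathbb{F}$-vector space with a non-degenerate symmetric bilinear form $\langle\cdot,\cdot\rangle$. The affine Lie algebra is $\widehat{\mathfrak h}=\mathfrak h\otimes\mathbb{F}[t,t^{-1}]\oplus\mathbb{F}\mathbf k$, where $\mathbf k$ is central and, writing $u(m)=u\otimes t^m$, $$[u(m),v(n)]=m\,\delta_{m+n,0}\langle u,v\rangle\mathbf k.$$ Set $\widehat{\mathfrak h}_+=\bigoplus_{n>0}\mathfrak h\otimes t^{-n}$ and $\widehat{\mathfrak h}_-=\bigoplus_{n>0}\mathfrak h\otimes t^{n}$. For a linear functional $\lambda\in(\widehat{\mathfrak h}_+)^*$, write $\lambda_n(u)=\lambda(u(-n))$ for $u\in\mathfrak h$, $n\in\mathbb{Z}_+$. <b>The vertex algebra $V_{\widehat{\mathfrak h}}(\ell,0)$.</b> For $\ell\in\mathbb{F}$, let $$V_{\widehat{\mathfrak h}}(\ell,0)=U(\widehat{\mathfrak h})\otimes_{U(\widehat{\mathfrak h}_-\oplus\mathfrak h\oplus\mathbb{F}\mathbf k)}\mathbb{F}_\ell,$$ where $\widehat{\mathfrak h}_-$ and $\mathfrak h=\mathfrak h\otimes t^0$ act on $\mathbb{F}_\ell=\mathbb{F}$ by $0$ and $\mathbf k$ acts by $\ell$. Set $\mathbf 1=1\otimes1$ and identify $u\in\mathfrak h$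 with $u(-1)\mathbf 1$. Then $V_{\widehat{\mathfrak h}}(\ell,0)$ is a vertex algebra with vacuum $\mathbf 1$, uniquely determined by $Y(u,x)=\sum_{n\in\mathbb{Z}}u(n)x^{-n-1}$ for $u\in\mathfrak h$. <b>The submodule $J(\ell,\lambda)$.</b> For $\lambda\in(\widehat{\mathfrak h}_+)^*$, let $J(\ell,\lambda)$ be the $\widehat{\mathfrak h}$-submodule of $V_{\widehat{\mathfrak h}}(\ell,0)$ generated by the vectors <ul> <li>$(u(-m)^p-\lambda_m(u)^p)\mathbf 1$ for $u\in\mathfrak h$, $m\in\mathbb{Z}_+$;</li> <li>$(u(-n)-\lambda_n(u))\mathbf 1$ for $u\in\mathfrak h$, $n\in p\mathbb{Z}_+$.</li> </ul> *)

From HB Require Import structures.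
From mathcomp Require Import all_boot all_order all_algebra.
Set Implicit Arguments.
Unset Strict Implicit.
Unset Printing Implicit Defensive.
Import Order.TTheory GRing.Theory Num.Theory.
Local Open Scope ring_scope.

(* Generalized binomial coefficient  binom(r,k) = r(r-1)...(r-k+1)/k!  for
   r : int, k : nat, as an integer (to be cast into F via %:~R):
   for r = n >= 0 it is 'C(n,k); for r = Negz n = -(n+1) it is
   (-1)^k 'C(n+k,k). *)
Definition binz (r : int) (k : nat) : int :=
  match r with
  | Posz n => ('C(n, k))%:Z
  | Negz n => (-1) ^+ k * ('C(n + k, k))%:Z
  end.

Section Defs.
Variable F : fieldType.

Definition nondeg_sym_bilinear (H : lmodType F) (form : H -> H -> F) : Prop :=
  [/\ (forall u1 u2 v (c : F), form (c *: u1 + u2) v = c * form u1 v + form u2 v),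
      (forall u v, form u v = form v u)
    & (forall u, (forall v, form u v = 0) -> u = 0)].

(* W is an  \hat h-module on which k acts by ell:  b u n  is the action of
   u(n) = u \otimes t^n, linear in u and in the vector, satisfying
   [u(m), v(n)] = m delta_{m+n,0} <u,v> k  with k = ell. *)
Definition heis_module (H : lmodType F) (form : H -> H -> F) (ell : F)
  (W : lmodType F) (b : H -> int -> W -> W) : Prop :=
  [/\ (forall u n (c : F) x y, b u n (c *: x + y) = c *: b u n x + b u n y),
      (forall u1 u2 (c : F) n x, b (c *: u1 + u2) n x = c *: b u1 n x + b u2 n x)
    & (forall u v (m n : int) x,
         b u m (b v n x) - b v n (b u m x)
         = (if m + n == 0 then m%:~R * form u v * ell else 0) *: x)].

(* (V, a, one) is the induced module
     V_{\hat h}(ell,0) = U(\hat h) \otimes_{U(\hat h_- + h + F k)} F_ell,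
   one = 1 \otimes 1, characterized by its universal property: for every
   \hat h-module W (with k acting by ell) and every w in W killed by all
   u(n), n >= 0, there is a unique module map V -> W sending one to w. *)
Definition induced_vacuum_module (H : lmodType F) (form : H -> H -> F)
  (ell : F) (V : lmodType F) (a : H -> int -> V -> V) (one : V) : Prop :=
  [/\ heis_module form ell a,
      (forall u (n : int), 0 <= n -> a u n one = 0)
    & (forall (W : lmodType F) (b : H -> int -> W -> W) (w : W),
         heis_module form ell b ->
         (forall u (n : int), 0 <= n -> b u n w = 0) ->
         exists f : V -> W,
           [/\ (forall (c : F) x y, f (c *: x + y) = c *: f x + f y),
               f one = w,
               (forall u n x, f (a u n x) = b u n (f x))
             & (forall g : V -> W,
                  (forall (c : F) x y, g (c *: x + y) = c *: g x + g y) ->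
                  g one = w ->
                  (forall u n x, g (a u n x) = b u n (g x)) ->
                  forall x, g x = f x)])].

(* Vertex algebra axioms for Y, with  Y v n = v_n  (so Y(v,x) = sum v_n x^{-n-1}).
   The Jacobi identity is stated coefficientwise: the coefficient of
   x0^{-l-1} x1^{-m-1} x2^{-n-1} of both sides, applied to w, where the
   (eventually vanishing) sums over i >= 0 are taken up to any large bound K. *)
Definition jacobi_identity (V : lmodType F) (Y : V -> int -> V -> V) : Prop :=
  forall (u v w : V) (l m n : int), exists N : nat, forall K : nat, (N <= K)%N ->
    \sum_(i < K) (((-1) ^+ i * (binz l i)%:~R) *:
        (Y u (l + m - (i : nat)%:Z) (Y v (n + (i : nat)%:Z) w)
         - ((-1) ^ l) *: Y v (l + n - (i : nat)%:Z) (Y u (m + (i : nat)%:Z) w)))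
    = \sum_(i < K) ((binz m i)%:~R *: Y (Y u (l + (i : nat)%:Z) v) (m + n - (i : nat)%:Z) w).

Definition vertex_algebra (V : lmodType F) (Y : V -> int -> V -> V) (one : V) : Prop :=
  [/\
      (forall v n (c : F) x y, Y v n (c *: x + y) = c *: Y v n x + Y v n y),
      (forall (c : F) v1 v2 n x, Y (c *: v1 + v2) n x = c *: Y v1 n x + Y v2 n x),
      (forall u v, exists N : int, forall n, N <= n -> Y u n v = 0),
      (forall n w, Y one n w = if n == -1 then w else 0)
    & [/\
          (forall v (n : int), 0 <= n -> Y v n one = 0),
          (forall v, Y v (-1) one = v)
        & jacobi_identity Y]].

Definition subspace (V : lmodType F) (S : V -> Prop) : Prop :=
  [/\ S 0, (forall x y, S x -> S y -> S (x + y)) & (forall (c : F) x, S x -> S (c *: x))].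

Definition is_ideal (V : lmodType F) (Y : V -> int -> V -> V) (I : V -> Prop) : Prop :=
  subspace I /\ (forall (u v : V) (n : int), I v -> I (Y u n v) /\ I (Y v n u)).

(* J(ell, lambda): the \hat h-submodule generated by the listed vectors.
   lam n u stands for lambda_n(u) = lambda(u(-n)), n >= 1. *)
Definition J_gen (H : lmodType F) (V : lmodType F) (p : nat)
  (a : H -> int -> V -> V) (one : V) (lam : nat -> H -> F) (x : V) : Prop :=
  (exists u (m : nat), (0 < m)%N /\
      x = iter p (a u (- (m%:Z))) one - (lam m u) ^+ p *: one)
  \/ (exists u (n : nat), [/\ (0 < n)%N, (p %| n)%N &
      x = a u (- (n%:Z)) one - lam n u *: one]).

Definition J_submodule (H : lmodType F) (V : lmodType F) (p : nat)
  (a : H -> int -> V -> V) (one : V) (lam : nat -> H -> F) (x : V) : Prop :=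
  forall S : V -> Prop,
    subspace S -> (forall u n y, S y -> S (a u n y)) ->
    (forall y, J_gen p a one lam y -> S y) -> S x.

End Defs.

(* Sufficiency: [V] is generated from the vacuum by the modes [u(n)], so by the
   associativity and commutator formulas [J] is an ideal as soon as
   [x_{-k-1} 1 = D^(k) x] lies in [J] for every generator [x].  On [u(-m)^p 1],
   [D^(k)] acts through a sum of commuting Leibniz operators, and in
   characteristic [p] only the terms [C(m-1+i,i)^p u(-m-i)^p 1] with [k = p i]
   survive; they are generators because [lambda_(m+i) = 0].  On [(u(-n) - lambda_n) 1]
   with [p | n], [D^(k)] gives [C(n-1+k,k) u(-n-k) 1], a generator when [p | k] and
   zero otherwise.
   Necessity: [D^(p(n-1))] maps the generator [(u(-1)^p - lambda_1^p) 1] to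
   [u(-n)^p 1], which therefore lies in the ideal [J].  The universal map from [V]
   to a module of truncated polynomials, where [u(-m)] acts as [lambda_m(u)] plus
   multiplication by a variable [y] with [y^p = 0], kills [J] but sends
   [u(-n)^p 1] to [lambda_n(u)^p] times the vacuum; hence [lambda_n(u) = 0]. *)

From HB Require Import structures.
From mathcomp Require Import all_boot all_order all_algebra.
From mathcomp Require Import boolp functions zify.
Import Order.TTheory GRing.Theory Num.Theory.
Set Implicit Arguments.
Unset Strict Implicit.
Unset Printing Implicit Defensive.
Local Open Scope ring_scope.

(** * Frobenius for commuting additive operators *)

Section AdditiveMaps.
Variables (U W : zmodType) (A : U -> W).
Hypothesis AD : {morph A : x y / x + y}.

Lemma morphD0 : A 0 = 0.
Proof. by apply: (addrI (A 0)); rewrite -AD !addr0. Qed.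

Lemma morphMn x n : A (x *+ n) = A x *+ n.
Proof.
by elim: n => [|n IHn]; [rewrite !mulr0n morphD0 | rewrite !mulrS AD IHn].
Qed.

End AdditiveMaps.

Section CommutingFrobenius.
Variables (W : zmodType) (p : nat).
Hypotheses (p_prime : prime p) (W_pchar : forall x : W, x *+ p = 0).
Implicit Types (A B : W -> W) (x : W).

Lemma iter_morphD A n : {morph A : x y / x + y} -> {morph iter n A : x y / x + y}.
Proof. by move=> AD; elim: n => [|n IHn] x y //=; rewrite IHn AD. Qed.

Lemma iter_commute A B : (forall x, A (B x) = B (A x)) ->
  forall n x, iter n A (B x) = B (iter n A x).
Proof. by move=> AB; elim=> [|n IHn] x //=; rewrite IHn AB. Qed.

Section Commuting.
Variables A B : W -> W.
Hypotheses (AD : {morph A : x y / x + y}) (BD : {morph B : x y / x + y}).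
Hypothesis AB : forall x, A (B x) = B (A x).

Lemma iter_addf_binomial n x : iter n (A \+ B) x =
  \sum_(i < n.+1) iter (n - i) A (iter i B x) *+ 'C(n, i).
Proof.
elim: n x => [|n IHn] x; first by rewrite big_ord_recl big_ord0 addr0.
rewrite iterS IHn /= (big_morph _ AD (morphD0 AD)) (big_morph _ BD (morphD0 BD)).
under eq_bigr do rewrite (morphMn AD).
under [X in _ + X]eq_bigr do rewrite (morphMn BD).
rewrite big_ord_recl [X in _ + X]big_ord_recr /=.
rewrite [in RHS]big_ord_recl [in RHS]big_ord_recr /=.
rewrite !binn !subnn !bin0 !subn0 -!addrA; congr (_ + _).
rewrite addrA -big_split /= add0n; congr (_ + _).
apply: eq_bigr => i _; rewrite /bump /= !add1n add0n binS mulrnDr.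
congr (_ + _); first by rewrite subSS -iterS -subSn ?ltn_ord.
by rewrite (iter_commute AB).
Qed.

Lemma iter_pcharD x : iter p (A \+ B) x = iter p A x + iter p B x.
Proof.
have [q Dp] : exists q, p = q.+1 by exists p.-1; rewrite prednK ?prime_gt0.
rewrite iter_addf_binomial Dp big_ord_recl big_ord_recr /= ?subn0 subnn bin0 binn.
rewrite big1 ?add0r ?mulr1n // => i _.
have /dvdnP[k ->] : (q.+1 %| 'C(q.+1, bump 0 i))%N.
  by apply: prime_dvd_bin; rewrite -Dp // Dp /bump /= add1n ltnS ltn_ord.
by rewrite mulnC mulrnA -Dp W_pchar mul0rn.
Qed.

End Commuting.

Lemma iter_pchar_sum (I : Type) (r : seq I) (T : I -> W -> W) :
  (forall i, {morph T i : x y / x + y}) -> (forall i j x, T i (T j x) = T j (T i x)) ->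
  forall x, iter p (fun z => \sum_(i <- r) T i z) x = \sum_(i <- r) iter p (T i) x.
Proof.
move=> TD TC; elim: r => [|i r IHr] x.
  by rewrite big_nil -(prednK (prime_gt0 p_prime)) iterS big_nil.
rewrite (_ : (fun z => _) = T i \+ (fun z => \sum_(j <- r) T j z)); last first.
  by apply: funext => z; rewrite big_cons.
rewrite iter_pcharD ?IHr ?big_cons //.
- by move=> y z; rewrite -big_split; apply: eq_bigr => j _; rewrite TD.
- by move=> y; rewrite (big_morph _ (TD i) (morphD0 (TD i))); apply: eq_bigr => j _.
Qed.

End CommutingFrobenius.

Lemma lmod_pchar (F : fieldType) (W : lmodType F) p :
  p \in [pchar F] -> forall x : W, x *+ p = 0.
Proof. by move=> pF x; rewrite -scaler_nat (pcharf0 pF) scale0r. Qed.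

Lemma iter_scale (R : pzRingType) (W : lmodType R) (c : R) (A : W -> W) :
  (forall c x, A (c *: x) = c *: A x) ->
  forall n x, iter n (fun z => c *: A z) x = c ^+ n *: iter n A x.
Proof.
by move=> AZ; elim=> [|n IHn] x /=; rewrite ?scale1r // IHn AZ scalerA exprS.
Qed.

(** * The induced module and the vertex algebra axioms *)

Section SubspaceModule.
Variables (F : fieldType) (V : lmodType F) (G : V -> Prop) (G_sub : subspace G).

Definition subspace_pred : pred V := fun x => `[< G x >].
Definition subspace_type of subspace G := {x : V | subspace_pred x}.
HB.instance Definition _ := SubType.copy (subspace_type G_sub) {x : V | subspace_pred x}.
HB.instance Definition _ := [Choice of subspace_type G_sub by <:].

Lemma subspace_pred_closed : GRing.subsemimod_closed subspace_pred.
Proof.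
case: G_sub => G0 GD GZ; split; first split.
- exact/asboolP.
- by move=> x y /asboolP Gx /asboolP Gy; apply/asboolP/GD.
- by move=> c x /asboolP Gx; apply/asboolP/GZ.
Qed.

HB.instance Definition _ :=
  GRing.SubChoice_isSubLmodule.Build _ _ _ (subspace_type G_sub) subspace_pred_closed.

End SubspaceModule.

Section InducedModule.
Variables (F : fieldType) (H : lmodType F) (form : H -> H -> F) (ell : F)
  (V : lmodType F) (a : H -> int -> V -> V) (one : V).
Hypothesis V_induced : induced_vacuum_module form ell a one.

(* The universal map [V -> G] followed by the inclusion [G -> V] is the identity,
   by uniqueness of the universal map [V -> V]. *)
Lemma induced_vacuum_module_ind (G : V -> Prop) : subspace G ->
  (forall u n x, G x -> G (a u n x)) -> G one -> forall x, G x.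
Proof.
move=> G_sub Ga G1.
pose W := subspace_type G_sub.
pose b u n (y : W) : W := exist _ (a u n (val y)) (asboolT (Ga u n _ (asboolW (valP y)))).
case: V_induced => [[aZD aDZ acomm] a_vac V_univ].
have b_heis : heis_module form ell b.
  by split=> *; apply: val_inj; rewrite /= ?aZD ?aDZ ?acomm.
pose w : W := exist _ one (asboolT G1).
have b_vac u n : 0 <= n -> b u n w = 0 by move=> n_ge0; apply: val_inj; rewrite /= a_vac.
have [f [f_lin f1 f_a _]] := V_univ W b w b_heis b_vac.
have [g [_ _ _ g_uniq]] := V_univ V a one (And3 aZD aDZ acomm) a_vac.
have valf_g : forall y, val (f y) = g y.
  by apply: g_uniq => [c y z||u n y]; rewrite ?f_lin ?f1 ?f_a.
have id_g : forall y, y = g y by apply: g_uniq.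
by move=> x; rewrite [x]id_g -valf_g; apply: asboolW (valP (f x)).
Qed.

End InducedModule.

Section HeisenbergModule.
Variables (F : fieldType) (H : lmodType F) (form : H -> H -> F) (ell : F)
  (W : lmodType F) (b : H -> int -> W -> W).
Hypothesis W_heis : heis_module form ell b.

Lemma heis_linear u n c x y : b u n (c *: x + y) = c *: b u n x + b u n y.
Proof. by case: W_heis => bZD _ _; apply: bZD. Qed.

Lemma heisD u n : {morph b u n : x y / x + y}.
Proof. by move=> x y; rewrite -[x in b u n (x + _)]scale1r heis_linear scale1r. Qed.

Lemma heis0 u n : b u n 0 = 0.
Proof. exact: morphD0 (heisD u n). Qed.

Lemma heisZ u n c x : b u n (c *: x) = c *: b u n x.
Proof. by rewrite -[c *: x]addr0 heis_linear heis0 addr0. Qed.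

Lemma heis_commute_neg u v (m1 m2 : nat) x : (0 < m1 + m2)%N ->
  b u (- m1%:Z) (b v (- m2%:Z) x) = b v (- m2%:Z) (b u (- m1%:Z) x).
Proof.
move=> m_gt0; case: W_heis => _ _ bcomm; apply/eqP; rewrite -subr_eq0 bcomm.
by rewrite ifF ?scale0r //; apply/eqP; lia.
Qed.

End HeisenbergModule.

Section VertexAlgebraFacts.
Variables (F : fieldType) (V : lmodType F) (Y : V -> int -> V -> V) (one : V).
Hypothesis V_va : vertex_algebra Y one.

Lemma Y_linear v n c x y : Y v n (c *: x + y) = c *: Y v n x + Y v n y.
Proof. by case: V_va => YZD _ _ _ _; apply: YZD. Qed.

Lemma YD v n : {morph Y v n : x y / x + y}.
Proof. by move=> x y; rewrite -[x in Y v n (x + _)]scale1r Y_linear scale1r. Qed.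

Lemma Y0 v n : Y v n 0 = 0.
Proof. exact: morphD0 (YD v n). Qed.

Lemma YZ v n c x : Y v n (c *: x) = c *: Y v n x.
Proof. by rewrite -[c *: x]addr0 Y_linear Y0 addr0. Qed.

Lemma Yl_linear c u v n x : Y (c *: u + v) n x = c *: Y u n x + Y v n x.
Proof. by case: V_va => _ YZDl _ _ _; apply: YZDl. Qed.

Lemma YlD u v n x : Y (u + v) n x = Y u n x + Y v n x.
Proof. by rewrite -[u in Y (u + _)]scale1r Yl_linear scale1r. Qed.

Lemma Yl0 n x : Y 0 n x = 0.
Proof. exact: (morphD0 (fun u v => YlD u v n x)). Qed.

Lemma YlZ c v n x : Y (c *: v) n x = c *: Y v n x.
Proof. by rewrite -[c *: v]addr0 Yl_linear Yl0 addr0. Qed.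

Lemma YlB u v n x : Y (u - v) n x = Y u n x - Y v n x.
Proof. by rewrite -scaleN1r YlD YlZ scaleN1r. Qed.

Lemma Y_vacuum n x : Y one n x = if n == -1 then x else 0.
Proof. by case: V_va => _ _ _ Y1 _; apply: Y1. Qed.

Lemma Y_creation v (n : int) : 0 <= n -> Y v n one = 0.
Proof. by case: V_va => _ _ _ _ [Yv1 _ _]; apply: Yv1. Qed.

Lemma Y_creationN1 v : Y v (-1) one = v.
Proof. by case: V_va => _ _ _ _ []. Qed.

Lemma Y_associator u v w (l n : int) : exists K0 : nat, forall K, (K0 <= K)%N ->
  Y (Y u l v) n w = \sum_(i < K) (((-1) ^+ i * (binz l i)%:~R) *:
     (Y u (l - i%:Z) (Y v (n + i%:Z) w) - ((-1) ^ l) *: Y v (l + n - i%:Z) (Y u i%:Z w))).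
Proof.
case: V_va => _ _ _ _ [_ _ jacobi]; have [N jacN] := jacobi u v w l 0 n.
exists N.+1 => [[//|K]] K_ge; have := jacN K.+1 (ltnW K_ge).
rewrite [X in _ = X]big_ord_recl [X in _ = _ + X]big1 => [|i _]; last first.
  by rewrite /= bin0n scale0r.
rewrite /= bin0 scale1r !addr0 add0r => <-.
by apply: eq_bigr => i _; rewrite add0r.
Qed.

Lemma Y_commutator u v w (m n : int) : exists K0 : nat, forall K, (K0 <= K)%N ->
  Y u m (Y v n w) - Y v n (Y u m w) =
  \sum_(i < K) (binz m i)%:~R *: Y (Y u i%:Z v) (m + n - i%:Z) w.
Proof.
case: V_va => _ _ _ _ [_ _ jacobi]; have [N jacN] := jacobi u v w 0 m n.
exists N.+1 => [[//|K]] K_ge; rewrite -(jacN K.+1 (ltnW K_ge)).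
rewrite big_ord_recl big1 => [|i _]; last by rewrite /= bin0n mulr0 scale0r.
by rewrite /= addr0 !add0r !subr0 expr0 bin0 mul1r expr0z !scale1r.
Qed.

End VertexAlgebraFacts.

(** * Divided powers of the translation operator *)

Section DividedPowers.
Variables (F : fieldType) (H : lmodType F) (form : H -> H -> F) (ell : F)
  (V : lmodType F) (a : H -> int -> V -> V) (Y : V -> int -> V -> V) (one : V).
Hypotheses (a_heis : heis_module form ell a)
  (a_vac : forall u (n : int), 0 <= n -> a u n one = 0)
  (V_va : vertex_algebra Y one)
  (Y_mode : forall u n x, Y (a u (-1) one) n x = a u n x).

(* [x_{-k-1} 1], i.e. the divided power [D^(k) x] of the translation operator. *)
Definition Dpow (x : V) (k : nat) : V := Y x (- k%:Z - 1) one.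

Lemma Dpow_one k : Dpow one k = if k == 0%N then one else 0.
Proof. by rewrite /Dpow (Y_vacuum V_va); case: k. Qed.

Lemma Dpow_subr_vacuum x c k : Dpow (x - c *: one) k.+1 = Dpow x k.+1.
Proof.
by rewrite /Dpow (YlB V_va) (YlZ V_va) -/(Dpow one k.+1) Dpow_one scaler0 subr0.
Qed.

Lemma Dpow_mode u x M k : Dpow (a u (- M.+1%:Z) x) k =
  \sum_(i < k.+1) 'C(M + i, i)%:R *: a u (- (M.+1 + i)%:Z) (Dpow x (k - i)).
Proof.
rewrite /Dpow -Y_mode; have [K0 assocK] := Y_associator V_va (a u (-1) one) x one
  (- M.+1%:Z) (- k%:Z - 1).
rewrite (assocK (maxn K0 k.+1) (leq_maxl _ _)).
rewrite (big_ord_widen (maxn K0 k.+1) (fun i : nat => 'C(M + i, i)%:R *: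
  a u (- (M.+1 + i)%:Z) (Y x (- (k - i)%N%:Z - 1) one)) (leq_maxr _ _)).
rewrite [RHS]big_mkcond /=; apply: eq_bigr => i _.
rewrite !Y_mode a_vac // (Y0 V_va) scaler0 subr0.
have -> : - M.+1%:Z - i%:Z = - (M.+1 + i)%:Z by rewrite PoszD opprD.
case: ltnP => i_le; last by rewrite (Y_creation V_va) ?(heis0 a_heis) ?scaler0 //; lia.
have -> : - k%:Z - 1 + i%:Z = - (k - i)%N%:Z - 1 by lia.
rewrite /binz intrM rmorphXn rmorphN1 mulrA -exprMn mulrNN mulr1 expr1n mul1r.
by rewrite pmulrn.
Qed.

Section LeibnizOperators.
Variables (u : H) (M : nat).

(* The [i]-th summand of [Dpow_mode], acting on sequences [k |-> D^(k) x]. *)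
Definition leibniz_op (i : nat) (s : nat -> V) : nat -> V := fun k =>
  if (i <= k)%N then 'C(M + i, i)%:R *: a u (- (M.+1 + i)%:Z) (s (k - i)%N) else 0.

Lemma leibniz_opD i : {morph leibniz_op i : s t / s + t}.
Proof.
move=> s t; apply: funext => k; rewrite /leibniz_op !addrfctE /=.
by case: ifP; rewrite ?addr0 // (heisD a_heis) scalerDr.
Qed.

Lemma leibniz_op_commute i j s :
  leibniz_op i (leibniz_op j s) = leibniz_op j (leibniz_op i s).
Proof.
apply: funext => k; rewrite /leibniz_op.
case: (leqP i k) => ik; case: (leqP j k) => jk //=.
- case: (leqP j (k - i)) => jki; case: (leqP i (k - j)) => ikj; try lia.
    rewrite !(heisZ a_heis) !scalerA mulrC (heis_commute_neg a_heis); last by lia.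
    by rewrite (_ : (k - i - j = k - j - i)%N) //; lia.
  by rewrite !(heis0 a_heis) !scaler0.
- by case: (leqP j (k - i)) => jki; try lia; rewrite (heis0 a_heis) scaler0.
- by case: (leqP i (k - j)) => ikj; try lia; rewrite (heis0 a_heis) scaler0.
Qed.

Lemma iter_leibniz_op i n s k : iter n (leibniz_op i) s k =
  if (i * n <= k)%N then
    'C(M + i, i)%:R ^+ n *: iter n (a u (- (M.+1 + i)%:Z)) (s (k - i * n)%N)
  else 0.
Proof.
elim: n k => [|n IHn] k; first by rewrite /= muln0 subn0 scale1r.
rewrite iterS {1}/leibniz_op IHn mulnS.
case: (leqP i k) => ik; last by rewrite ifF //; apply/negbTE; rewrite -ltnNge; lia.
case: (leqP (i + i * n) k) => ink.
  by rewrite ifT ?(heisZ a_heis) ?scalerA -?exprS -?iterS ?subnDA //; lia.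
by rewrite ifF ?(heis0 a_heis) ?scaler0 //; apply/negbTE; rewrite -ltnNge; lia.
Qed.

Lemma Dpow_iter_mode n K k : (k < K)%N ->
  Dpow (iter n (a u (- M.+1%:Z)) one) k =
  iter n (fun s => \sum_(i < K) leibniz_op i s) (Dpow one) k.
Proof.
elim: n k => [//|n IHn] k k_lt; rewrite !iterS Dpow_mode fct_sumE.
rewrite (big_ord_widen K (fun i : nat => 'C(M + i, i)%:R *:
  a u (- (M.+1 + i)%:Z) (Dpow (iter n (a u (- M.+1%:Z)) one) (k - i))) k_lt).
rewrite big_mkcond /=; apply: eq_bigr => i _.
by rewrite /leibniz_op ltnS; case: ifP => // ik; rewrite IHn //; lia.
Qed.

End LeibnizOperators.

Variable p : nat.
Hypotheses (p_prime : prime p) (p_char : p \in [pchar F]).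

(* Frobenius: the [p]-th power of a sum of commuting Leibniz operators is the
   sum of their [p]-th powers, so only the summands with [p * i = k] survive. *)
Lemma Dpow_iter_pchar u M k : Dpow (iter p (a u (- M.+1%:Z)) one) k =
  if (p %| k)%N then
    'C(M + k %/ p, k %/ p)%:R ^+ p *: iter p (a u (- (M.+1 + k %/ p)%:Z)) one
  else 0.
Proof.
rewrite (Dpow_iter_mode _ _ _ (ltnSn k)).
rewrite (iter_pchar_sum p_prime (lmod_pchar (W := nat -> V) p_char)); last 2 first.
- exact: leibniz_opD.
- exact: leibniz_op_commute.
have iter0 n i : iter n (a u i) 0 = 0 := morphD0 (iter_morphD n (heisD a_heis u i)).
have summand (i : 'I_k.+1) : iter p (leibniz_op u M i) (Dpow one) k =
    if (i * p == k)%N then 'C(M + i, i)%:R ^+ p *: iter p (a u (- (M.+1 + i)%:Z)) one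
    else 0.
  rewrite iter_leibniz_op Dpow_one subn_eq0 eqn_leq.
  by case: leqP => //= _; case: ifP; rewrite ?iter0 ?scaler0.
rewrite fct_sumE; under eq_bigr do rewrite summand.
case: ifP => [/dvdnP[q ->] | pNk].
  have q_lt : (q < (q * p).+1)%N by rewrite ltnS leq_pmulr ?prime_gt0.
  rewrite mulnK ?prime_gt0 // (bigD1 (Ordinal q_lt)) //= eqxx big1 ?addr0 // => i iNq.
  rewrite eqn_pmul2r ?prime_gt0 // ifF //; apply/negbTE; apply: contra iNq => /eqP iq.
  by apply/eqP; apply: val_inj.
rewrite big1 // => i _; rewrite ifF //; apply: contraFF pNk => /eqP <-.
exact: dvdn_mull.
Qed.

End DividedPowers.

(** * Sufficiency *)

Lemma prime_dvd_bin_shift p M k : prime p -> (p %| M.+1)%N -> ~~ (p %| k)%N ->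
  (p %| 'C(M + k, k))%N.
Proof.
move=> p_prime pM; case: k => [|k] pNk; first by rewrite dvdn0 in pNk.
have := mul_bin_left (M + k.+1) k; rewrite (_ : (M + k.+1 - k = M.+1)%N); last by lia.
move=> Ek; have : (p %| k.+1 * 'C(M + k.+1, k.+1))%N by rewrite Ek dvdn_mulr.
by rewrite Euclid_dvdM // (negbTE pNk).
Qed.

Section GeneratedSubmodule.
Variables (F : fieldType) (H : lmodType F) (V : lmodType F) (p : nat)
  (a : H -> int -> V -> V) (one : V) (lam : nat -> H -> F).
Notation J := (J_submodule p a one lam).

Lemma J_submodule_ind (S : V -> Prop) : subspace S -> (forall u n y, S y -> S (a u n y)) ->
  (forall y, J_gen p a one lam y -> S y) -> forall x, J x -> S x.
Proof. by move=> S_sub Sa Sgen x Jx; apply: Jx. Qed.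

Lemma J_subspace : subspace J.
Proof.
split=> [S [S0 _ _] //|x y Jx Jy S S_sub Sa Sgen|c x Jx S S_sub Sa Sgen].
  by case: (S_sub) => _ SD _; apply: SD; [apply: Jx | apply: Jy].
by case: (S_sub) => _ _ SZ; apply: SZ; apply: Jx.
Qed.

Lemma mem_J0 : J 0.
Proof. by case: J_subspace. Qed.

Lemma mem_JD x y : J x -> J y -> J (x + y).
Proof. by case: J_subspace => _ JD _; apply: JD. Qed.

Lemma mem_JZ c x : J x -> J (c *: x).
Proof. by case: J_subspace => _ _ JZ; apply: JZ. Qed.

Lemma mem_JB x y : J x -> J y -> J (x - y).
Proof. by move=> Jx Jy; rewrite -scaleN1r; apply: mem_JD Jx (mem_JZ _ Jy). Qed.

Lemma mem_J_sum (I : Type) (r : seq I) (P : pred I) (G : I -> V) :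
  (forall i, P i -> J (G i)) -> J (\sum_(i <- r | P i) G i).
Proof.
move=> JG; elim/big_ind: _ => //; [exact: mem_J0 | exact: mem_JD].
Qed.

Lemma mem_J_mode u n x : J x -> J (a u n x).
Proof. by move=> Jx S S_sub Sa Sgen; exact: Sa (Jx S S_sub Sa Sgen). Qed.

Lemma mem_J_gen x : J_gen p a one lam x -> J x.
Proof. by move=> genx S _ _ Sgen; apply: Sgen. Qed.

End GeneratedSubmodule.

Section VanishingLambdaIdeal.
Variables (F : fieldType) (H : lmodType F) (form : H -> H -> F) (ell : F)
  (V : lmodType F) (a : H -> int -> V -> V) (Y : V -> int -> V -> V) (one : V)
  (p : nat) (lam : nat -> H -> F).
Hypotheses (V_induced : induced_vacuum_module form ell a one)
  (V_va : vertex_algebra Y one)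
  (Y_mode : forall u n x, Y (a u (-1) one) n x = a u n x)
  (p_prime : prime p) (p_char : p \in [pchar F])
  (lam_vanish : forall u (n : nat), (2 <= n)%N -> lam n u = 0).
Notation J := (J_submodule p a one lam).

Let a_heis : heis_module form ell a. Proof. by case: V_induced. Qed.
Let a_vac : forall u (n : int), 0 <= n -> a u n one = 0. Proof. by case: V_induced. Qed.

Lemma J_left_ideal u n x : J x -> J (Y u n x).
Proof.
move: u n x; apply: (induced_vacuum_module_ind V_induced
  (G := fun u => forall n x, J x -> J (Y u n x))).
- split=> [n x _|u v Ju Jv n x Jx|c u Ju n x Jx].
  + by rewrite (Yl0 V_va); exact: mem_J0.
  + by rewrite (YlD V_va); apply: mem_JD; [apply: Ju | apply: Jv].
  + by rewrite (YlZ V_va); apply: mem_JZ; apply: Ju.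
- move=> h l u Ju n x Jx; rewrite -Y_mode.
  have [K assocK] := Y_associator V_va (a h (-1) one) u x l n.
  rewrite (assocK K (leqnn K)); apply: mem_J_sum => i _; apply: mem_JZ.
  apply: mem_JB; first by rewrite Y_mode; apply: mem_J_mode; apply: Ju.
  by apply: mem_JZ; apply: Ju; rewrite Y_mode; apply: mem_J_mode.
- by move=> n x Jx; rewrite (Y_vacuum V_va); case: ifP => _ //; exact: mem_J0.
Qed.

Lemma J_Dpow_pow_gen u M k : (0 < k)%N ->
  J (Dpow Y one (iter p (a u (- M.+1%:Z)) one) k).
Proof.
move=> k_gt0; rewrite (Dpow_iter_pchar a_heis a_vac V_va Y_mode p_prime p_char).
case: ifP => [/dvdnP[i Dk] | _]; last exact: mem_J0.
have i_gt0 : (0 < i)%N by move: k_gt0; rewrite Dk muln_gt0 => /andP[].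
rewrite Dk mulnK ?prime_gt0 //; apply: mem_JZ; apply: mem_J_gen; left.
exists u, (M.+1 + i)%N; split=> //.
by rewrite lam_vanish ?expr0n ?eqn0Ngt ?prime_gt0 ?scale0r ?subr0 //; lia.
Qed.

Lemma J_Dpow_mode_gen u n k : (0 < n)%N -> (p %| n)%N ->
  J (Dpow Y one (a u (- n%:Z) one) k).
Proof.
case: n => // M _ pn.
have n_gt1 : (1 < M.+1)%N := leq_trans (prime_gt1 p_prime) (dvdn_leq _ pn).
rewrite (Dpow_mode a_heis a_vac V_va Y_mode).
rewrite big_ord_recr big1 /= => [|i _]; last first.
  by rewrite (Dpow_one V_va) subn_eq0 leqNgt ltn_ord (heis0 a_heis) scaler0.
rewrite add0r subnn (Dpow_one V_va) /=.
have [pk | pNk] := boolP (p %| k)%N.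
  apply: mem_JZ; apply: mem_J_gen; right; exists u, (M.+1 + k)%N.
  by split; rewrite ?dvdn_add // ?lam_vanish ?scale0r ?subr0 //; lia.
have /eqP -> : 'C(M + k, k)%:R == 0 :> F.
  by rewrite -(dvdn_pcharf p_char) prime_dvd_bin_shift.
by rewrite scale0r; exact: mem_J0.
Qed.

Lemma J_gen_Y_vacuum y n : J_gen p a one lam y -> J (Y y n one).
Proof.
move=> geny; case: n => [n|[|k]].
- by rewrite (Y_creation V_va) //; exact: mem_J0.
- by rewrite (Y_creationN1 V_va); exact: mem_J_gen.
rewrite (_ : Negz k.+1 = - k.+1%:Z - 1); last by lia.
change (J (Dpow Y one y k.+1)).
case: geny => [[u [m [m_gt0 ->]]] | [u [n [n_gt0 pn ->]]]].
  by case: m m_gt0 => // M _; rewrite (Dpow_subr_vacuum V_va); exact: J_Dpow_pow_gen.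
by rewrite (Dpow_subr_vacuum V_va); exact: J_Dpow_mode_gen.
Qed.

Lemma J_Y_vacuum x : J x -> forall n, J (Y x n one).
Proof.
move: x; apply: (J_submodule_ind (S := fun x => forall n, J (Y x n one))).
- split=> [n|x y Jx Jy n|c x Jx n].
  + by rewrite (Yl0 V_va); exact: mem_J0.
  + by rewrite (YlD V_va); exact: mem_JD.
  + by rewrite (YlZ V_va); exact: mem_JZ.
- move=> h l x Jx n; rewrite -Y_mode.
  have [K assocK] := Y_associator V_va (a h (-1) one) x one l n.
  rewrite (assocK K (leqnn K)); apply: mem_J_sum => i _; apply: mem_JZ.
  apply: mem_JB; first by rewrite Y_mode; exact: mem_J_mode.
  by rewrite Y_mode a_vac // (Y0 V_va) scaler0; exact: mem_J0.
- by move=> y geny n; exact: J_gen_Y_vacuum.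
Qed.

Lemma J_right_ideal u n x : J x -> J (Y x n u).
Proof.
move: u n x; apply: (induced_vacuum_module_ind V_induced
  (G := fun u => forall n x, J x -> J (Y x n u))).
- split=> [n x _|u v Ju Jv n x Jx|c u Ju n x Jx].
  + by rewrite (Y0 V_va); exact: mem_J0.
  + by rewrite (YD V_va); apply: mem_JD; [apply: Ju | apply: Jv].
  + by rewrite (YZ V_va); apply: mem_JZ; apply: Ju.
- move=> h l u Ju n x Jx; rewrite -Y_mode.
  have [K commK] := Y_commutator V_va (a h (-1) one) x u l n.
  rewrite -[Y x n _](subKr (Y (a h (-1) one) l (Y x n u))) (commK K (leqnn K)).
  apply: mem_JB; first by rewrite Y_mode; apply: mem_J_mode; apply: Ju.
  apply: mem_J_sum => i _; apply: mem_JZ; apply: Ju.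
  by rewrite Y_mode; exact: mem_J_mode.
- by move=> n x Jx; exact: J_Y_vacuum.
Qed.

Lemma is_ideal_J : is_ideal Y J.
Proof.
split=> [|u v n Jv]; first exact: J_subspace.
by split; [exact: J_left_ideal | exact: J_right_ideal].
Qed.

End VanishingLambdaIdeal.

(** * A Heisenberg module of truncated polynomials *)

Section TruncatedPolynomials.
Variables (F : fieldType) (p : nat) (d : nat).
Hypotheses (p_prime : prime p) (p_char : p \in [pchar F]).

Definition var := (nat * 'I_d)%type.
Definition exps := var -> nat.
Definition coeffs := exps -> F^o.
Implicit Types (e : exps) (k : var) (g : coeffs).

Definition set_exp e k n : exps := fun k' => if k' == k then n else e k'.

Lemma set_exp_eq e k n : set_exp e k n k = n.
Proof. by rewrite /set_exp eqxx. Qed.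

Lemma set_exp_ne e k n k' : k' != k -> set_exp e k n k' = e k'.
Proof. by rewrite /set_exp => /negbTE ->. Qed.

Lemma set_exp_id e k : set_exp e k (e k) = e.
Proof. by apply: funext => k'; rewrite /set_exp; case: eqP => [->|]. Qed.

Lemma set_exp_set e k n n' : set_exp (set_exp e k n) k n' = set_exp e k n'.
Proof. by apply: funext => k'; rewrite /set_exp; case: eqP. Qed.

Lemma set_expC e k n k' n' : k' != k ->
  set_exp (set_exp e k n) k' n' = set_exp (set_exp e k' n') k n.
Proof.
move=> k'k; apply: funext => k''; rewrite /set_exp.
by case: eqP => [->|]; rewrite ?(negbTE k'k).
Qed.

(* [g e] is the coefficient of the monomial [y^e].  [mul_y k] multiplies by the
   variable [y_k], killing [y_k^p]; [der_y k] is the partial derivative in [y_k]. *)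
Definition mul_y k g : coeffs := fun e =>
  if (e k == 0%N) || (e k == p) then 0 else g (set_exp e k (e k).-1).
Definition der_y k g : coeffs := fun e => (e k).+1%:R * g (set_exp e k (e k).+1).

Lemma mul_yD k : {morph mul_y k : g h / g + h}.
Proof.
move=> g h; apply: funext => e; rewrite /mul_y !addrfctE /=.
by case: ifP => _; rewrite ?addr0.
Qed.

Lemma der_yD k : {morph der_y k : g h / g + h}.
Proof. by move=> g h; apply: funext => e; rewrite /der_y !addrfctE /= mulrDr. Qed.

Lemma mul_y_sum k (I : Type) (r : seq I) (P : pred I) (G : I -> coeffs) :
  mul_y k (\sum_(i <- r | P i) G i) = \sum_(i <- r | P i) mul_y k (G i).
Proof. exact: (big_morph _ (mul_yD k) (morphD0 (mul_yD k))). Qed.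

Lemma der_y_sum k (I : Type) (r : seq I) (P : pred I) (G : I -> coeffs) :
  der_y k (\sum_(i <- r | P i) G i) = \sum_(i <- r | P i) der_y k (G i).
Proof. exact: (big_morph _ (der_yD k) (morphD0 (der_yD k))). Qed.

Lemma mul_yZ k c g : mul_y k (c *: g) = c *: mul_y k g.
Proof.
by apply: funext => e; rewrite /mul_y !scalrfctE /=; case: ifP => _; rewrite ?scaler0.
Qed.

Lemma der_yZ k c g : der_y k (c *: g) = c *: der_y k g.
Proof. by apply: funext => e; rewrite /der_y !scalrfctE /=; exact: mulrCA. Qed.

Lemma mul_yC k k' g : mul_y k (mul_y k' g) = mul_y k' (mul_y k g).
Proof.
have [-> // | kk'] := eqVneq k k'; have k'k : k' != k by rewrite eq_sym.
apply: funext => e; rewrite /mul_y !set_exp_ne //.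
by do 2 case: ifP => _ //; rewrite set_expC.
Qed.

Lemma der_yC k k' g : der_y k (der_y k' g) = der_y k' (der_y k g).
Proof.
have [-> // | kk'] := eqVneq k k'; have k'k : k' != k by rewrite eq_sym.
by apply: funext => e; rewrite /der_y !set_exp_ne // set_expC // mulrCA.
Qed.

Lemma der_mul_y k k' g :
  der_y k (mul_y k' g) - mul_y k' (der_y k g) = if k == k' then g else 0.
Proof.
have [<- | kk'] := eqVneq k k'; last first.
  have k'k : k' != k by rewrite eq_sym.
  apply: funext => e; rewrite addrfctE opprfctE /= /mul_y /der_y !set_exp_ne //.
  by case: ifP => _; rewrite ?mulr0 ?subrr // set_expC // subrr.
apply: funext => e; rewrite addrfctE opprfctE /= /mul_y /der_y !set_exp_eq !set_exp_set.
rewrite set_exp_id /=; have p_gt1 := prime_gt1 p_prime.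
have [ek1 | ek1] := eqVneq (e k).+1 p.
  rewrite ifF; last by apply/negbTE; rewrite negb_or; apply/andP; split; apply/eqP; lia.
  rewrite ek1 (pcharf0 p_char) mul0r sub0r (_ : (e k).-1.+1 = e k); last by lia.
  have ek_N1 : (e k)%:R = -1 :> F.
    by apply/eqP; rewrite -addr_eq0 -mulrSr ek1 (pcharf0 p_char).
  by rewrite set_exp_id ek_N1 mulN1r opprK.
have [-> | ek0] /= := eqVneq (e k) 0%N; first by rewrite subr0 mul1r.
have [-> | ekp] /= := eqVneq (e k) p.
  by rewrite subr0 -addn1 natrD (pcharf0 p_char) add0r mul1r.
rewrite prednK ?lt0n // set_exp_id -addn1 natrD mulrDl mul1r.
by rewrite addrAC subrr add0r.
Qed.

Definition vac : coeffs := fun e => if `[< forall k, e k = 0%N >] then 1 else 0.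

Lemma vac_neq0 : vac != 0.
Proof.
apply/eqP => /(congr1 (fun g : coeffs => g (fun _ => 0%N))).
by rewrite /vac asboolT //= => /eqP; rewrite oner_eq0.
Qed.

Lemma der_y_vac k : der_y k vac = 0.
Proof.
apply: funext => e; rewrite /der_y /vac asboolF ?mulr0 // => e0.
by have := e0 k; rewrite set_exp_eq.
Qed.

Lemma iter_mul_y_vac_support k n e :
  iter n (mul_y k) vac e != 0 -> e k = n /\ (n < p)%N.
Proof.
elim: n e => [|n IHn] e /=.
  by rewrite /vac; case: asboolP => [e0 _ | _]; rewrite ?eqxx ?e0 ?prime_gt0.
rewrite {1}/mul_y; case: ifP => [_|/norP[ek0 ekp]]; first by rewrite eqxx.
case/IHn; rewrite set_exp_eq => ek1 n_lt.
have ek : e k = n.+1 by rewrite -ek1 prednK ?lt0n.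
by rewrite ltn_neqAle n_lt andbT -ek.
Qed.

Lemma iter_mul_y_vac k : iter p (mul_y k) vac = 0.
Proof.
apply: funext => e; apply/eqP; apply: contraT => /iter_mul_y_vac_support[_].
by rewrite ltnn.
Qed.

End TruncatedPolynomials.

Section HeisenbergModel.
Variables (F : fieldType) (p : nat) (H : vectType F) (form : H -> H -> F) (ell : F)
  (lam : nat -> H -> F).
Hypotheses (p_prime : prime p) (p_char : p \in [pchar F])
  (form_nondeg : nondeg_sym_bilinear form)
  (lam_linear : forall n : nat, (0 < n)%N ->
     forall (c : F) (u v : H), lam n (c *: u + v) = c * lam n u + lam n v).

Let d := \dim (fullv : {vspace H}).
Let bs := vbasis (fullv : {vspace H}).
Local Notation coeffs := (coeffs F d).
Implicit Types (g : coeffs) (u v : H).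

Lemma form_linear c u1 u2 v : form (c *: u1 + u2) v = c * form u1 v + form u2 v.
Proof. by case: form_nondeg => formZD _ _; apply: formZD. Qed.

Lemma form0l v : form 0 v = 0.
Proof.
have := form_linear 1 0 0 v; rewrite scaler0 addr0 mul1r => form0.
by apply: (addrI (form 0 v)); rewrite addr0 -form0.
Qed.

Lemma form_basis_expansion u v : \sum_(i < d) form u bs`_i * coord bs i v = form u v.
Proof.
case: form_nondeg => _ formC _; rewrite [in RHS](coord_vbasis (memvf v)) formC.
elim: (index_enum _) => [|i r IHr]; first by rewrite !big_nil form0l.
by rewrite !big_cons form_linear IHr formC mulrC.
Qed.

(* [y_(m,i)] with [p %| m] never occur: [u(-m)] acts by [lam m u] alone there. *)
Definition mul_h m u g : coeffs :=
  if (p %| m)%N then 0 else \sum_(i < d) coord bs i u *: mul_y p (m, i) g.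
Definition der_h m u g : coeffs := \sum_(i < d) form u bs`_i *: der_y (m, i) g.

Lemma mul_hD m u : {morph mul_h m u : g g' / g + g'}.
Proof.
move=> g g'; rewrite /mul_h; case: ifP => _; first by rewrite addr0.
by rewrite -big_split; apply: eq_bigr => i _; rewrite mul_yD scalerDr.
Qed.

Lemma der_hD m u : {morph der_h m u : g g' / g + g'}.
Proof.
by move=> g g'; rewrite /der_h -big_split; apply: eq_bigr => i _; rewrite der_yD scalerDr.
Qed.

Lemma mul_hZ m u c g : mul_h m u (c *: g) = c *: mul_h m u g.
Proof.
rewrite /mul_h; case: ifP => _; first by rewrite scaler0.
by rewrite scaler_sumr; apply: eq_bigr => i _; rewrite mul_yZ !scalerA mulrC.
Qed.

Lemma der_hZ m u c g : der_h m u (c *: g) = c *: der_h m u g.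
Proof.
by rewrite /der_h scaler_sumr; apply: eq_bigr => i _; rewrite der_yZ !scalerA mulrC.
Qed.

Lemma mul_h_linear m c u1 u2 g :
  mul_h m (c *: u1 + u2) g = c *: mul_h m u1 g + mul_h m u2 g.
Proof.
rewrite /mul_h; case: ifP => _; first by rewrite scaler0 addr0.
rewrite scaler_sumr -big_split; apply: eq_bigr => i _.
by rewrite (coord_is_scalar _ _ c u1 u2) scalerDl scalerA.
Qed.

Lemma der_h_linear m c u1 u2 g :
  der_h m (c *: u1 + u2) g = c *: der_h m u1 g + der_h m u2 g.
Proof.
rewrite /der_h scaler_sumr -big_split; apply: eq_bigr => i _.
by rewrite form_linear scalerDl scalerA.
Qed.

Lemma mul_hC m u m' v g : mul_h m u (mul_h m' v g) = mul_h m' v (mul_h m u g).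
Proof.
have mul_y0 (k : var d) : mul_y p k 0 = 0 :> coeffs := morphD0 (mul_yD p k).
rewrite /mul_h; case: (p %| m)%N; case: (p %| m')%N => //=;
  try by rewrite big1 // => i _; rewrite mul_y0 scaler0.
under eq_bigr do rewrite mul_y_sum scaler_sumr.
under [RHS]eq_bigr do rewrite mul_y_sum scaler_sumr.
rewrite exchange_big /=; apply: eq_bigr => i _; apply: eq_bigr => j _.
by rewrite !mul_yZ !scalerA mulrC mul_yC.
Qed.

Lemma der_hC m u m' v g : der_h m u (der_h m' v g) = der_h m' v (der_h m u g).
Proof.
rewrite /der_h.
under eq_bigr do rewrite der_y_sum scaler_sumr.
under [RHS]eq_bigr do rewrite der_y_sum scaler_sumr.
rewrite exchange_big /=; apply: eq_bigr => i _; apply: eq_bigr => j _.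
by rewrite !der_yZ !scalerA mulrC der_yC.
Qed.

Lemma der_mul_h m u m' v g :
  der_h m u (mul_h m' v g) - mul_h m' v (der_h m u g) =
  (if (m == m') && ~~ (p %| m')%N then form u v else 0) *: g.
Proof.
rewrite /mul_h; case: ifP => pm'.
  by rewrite andbF scale0r (morphD0 (der_hD m u)) subrr.
rewrite andbT /der_h.
under eq_bigr do rewrite der_y_sum scaler_sumr.
under [X in _ - X]eq_bigr do rewrite mul_y_sum scaler_sumr.
rewrite [X in _ - X]exchange_big /= -sumrB.
under eq_bigr do rewrite -sumrB.
have commute (i j : 'I_d) :
    form u bs`_i *: der_y (m, i) (coord bs j v *: mul_y p (m', j) g) -
    coord bs j v *: mul_y p (m', j) (form u bs`_i *: der_y (m, i) g) =
    (form u bs`_i * coord bs j v) *: (if (m, i) == (m', j) then g else 0).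
  rewrite der_yZ mul_yZ !scalerA [coord _ _ _ * _]mulrC -scalerBr.
  by rewrite der_mul_y.
under eq_bigr do under eq_bigr do rewrite commute.
have [<- | mm'] := eqVneq m m'.
  rewrite -form_basis_expansion scaler_suml; apply: eq_bigr => i _.
  rewrite (bigD1 i) //= eqxx big1 ?addr0 // => j ji.
  by rewrite xpair_eqE eqxx eq_sym (negbTE ji) scaler0.
rewrite scale0r big1 // => i _; rewrite big1 // => j _.
by rewrite xpair_eqE (negbTE mm') scaler0.
Qed.

(* [u(m)], [m >= 0], acts by [m ell] times a derivation, and [u(-k-1)] (that is,
   [Negz k]) by the scalar [lam k.+1 u] plus multiplication by a variable. *)
Definition model_mode u (n : int) g : coeffs :=
  match n with
  | Posz m => (m%:R * ell) *: der_h m u g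
  | Negz k => lam k.+1 u *: g + mul_h k.+1 u g
  end.

Lemma model_mode_linear u n c g g' :
  model_mode u n (c *: g + g') = c *: model_mode u n g + model_mode u n g'.
Proof.
case: n => [m|k] /=; first by rewrite der_hD der_hZ scalerDr !scalerA mulrC.
by rewrite mul_hD mul_hZ !scalerDr !scalerA [lam _ _ * c]mulrC addrACA.
Qed.

Lemma model_mode_linear_h c u1 u2 n g :
  model_mode (c *: u1 + u2) n g = c *: model_mode u1 n g + model_mode u2 n g.
Proof.
case: n => [m|k] /=; first by rewrite der_h_linear scalerDr !scalerA [_ * c]mulrC.
by rewrite lam_linear // mul_h_linear scalerDl -scalerA scalerDr addrACA.
Qed.

Lemma model_mode_commute_pos u v m1 m2 g :
  model_mode u (Posz m1) (model_mode v (Posz m2) g) =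
  model_mode v (Posz m2) (model_mode u (Posz m1) g).
Proof. by rewrite /= !der_hZ !scalerA mulrC der_hC. Qed.

Lemma model_mode_commute_neg u v k1 k2 g :
  model_mode u (Negz k1) (model_mode v (Negz k2) g) =
  model_mode v (Negz k2) (model_mode u (Negz k1) g).
Proof.
rewrite /= !mul_hD !mul_hZ mul_hC !scalerDr !scalerA mulrC -!addrA; congr (_ + _).
by rewrite !addrA; congr (_ + _); rewrite addrC.
Qed.

Lemma model_mode_commute_mixed u v m k g :
  model_mode u (Posz m) (model_mode v (Negz k) g) -
    model_mode v (Negz k) (model_mode u (Posz m) g) =
  (if m == k.+1 then m%:R * form u v * ell else 0) *: g.
Proof.
rewrite /= der_hD der_hZ mul_hZ !scalerDr !scalerA [_ * lam _ _]mulrC.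
rewrite opprD addrACA subrr add0r -scalerBr der_mul_h scalerA.
have [-> | mk] /= := eqVneq m k.+1; last by rewrite mulr0.
case: ifP => pNk; first by rewrite mulrAC.
rewrite (_ : k.+1%:R = 0 :> F) ?mul0r ?mulr0 //.
by apply/eqP; rewrite -(dvdn_pcharf p_char); apply: negbFE.
Qed.

Lemma model_heis : heis_module form ell model_mode.
Proof.
split=> [u n c g g'|u1 u2 c n g|].
- exact: model_mode_linear.
- exact: model_mode_linear_h.
move=> u v [m1|k1] [m2|k2] g.
- rewrite model_mode_commute_pos subrr; case: eqP => m12; rewrite ?scale0r //.
  by rewrite (_ : m1 = 0%N) ?mul0r ?scale0r //; lia.
- by rewrite model_mode_commute_mixed; congr (_ *: _); case: eqP; case: eqP => //; lia.
- rewrite -opprB model_mode_commute_mixed -scaleNr; congr (_ *: _).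
  have -> : (Negz k1 + m2%:Z == 0) = (m2 == k1.+1) by apply/eqP/eqP; lia.
  case: eqP => [-> | _]; last by rewrite oppr0.
  by case: form_nondeg => _ formC _; rewrite formC NegzE mulrNz pmulrn !mulNr.
- rewrite model_mode_commute_neg subrr; case: eqP => k12; rewrite ?scale0r //; lia.
Qed.

Lemma model_mode_vac u (n : int) : 0 <= n -> model_mode u n (@vac F d) = 0.
Proof.
case: n => // m _; rewrite /= /der_h big1 ?scaler0 // => i _.
by rewrite der_y_vac scaler0.
Qed.

Lemma model_mode_vac_pdvd u M : (p %| M.+1)%N ->
  model_mode u (Negz M) (@vac F d) = lam M.+1 u *: @vac F d.
Proof. by move=> pM; rewrite /= /mul_h pM addr0. Qed.

Lemma iter_model_mode_vac u M :
  iter p (model_mode u (Negz M)) (@vac F d) = lam M.+1 u ^+ p *: @vac F d.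
Proof.
have W_pchar := lmod_pchar (W := coeffs) p_char.
have -> : model_mode u (Negz M) = (fun g => lam M.+1 u *: g) \+ mul_h M.+1 u by [].
rewrite (iter_pcharD p_prime W_pchar); last 3 first.
- by move=> g g'; rewrite scalerDr.
- exact: mul_hD.
- by move=> g; rewrite mul_hZ.
rewrite (@iter_scale _ _ _ id) //; suff -> : iter p (mul_h M.+1 u) (@vac F d) = 0.
  by rewrite addr0 iter_fix.
rewrite /mul_h; case: (p %| M.+1)%N; first by rewrite -(prednK (prime_gt0 p_prime)).
rewrite (iter_pchar_sum p_prime W_pchar) ?big1 // => [i _|i g g'|i j g].
- rewrite (@iter_scale _ _ _ (mul_y p (M.+1, i))) ?iter_mul_y_vac ?scaler0 //.
  exact: mul_yZ.
- by rewrite mul_yD scalerDr.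
- by rewrite !mul_yZ !scalerA mulrC mul_yC.
Qed.

End HeisenbergModel.

(** * Necessity *)

Section IdealForcesVanishing.
Variables (F : fieldType) (H : vectType F) (form : H -> H -> F) (ell : F)
  (V : lmodType F) (a : H -> int -> V -> V) (Y : V -> int -> V -> V) (one : V)
  (p : nat) (lam : nat -> H -> F).
Hypotheses (V_induced : induced_vacuum_module form ell a one)
  (V_va : vertex_algebra Y one)
  (Y_mode : forall u n x, Y (a u (-1) one) n x = a u n x)
  (p_prime : prime p) (p_char : p \in [pchar F])
  (form_nondeg : nondeg_sym_bilinear form)
  (lam_linear : forall n : nat, (0 < n)%N ->
     forall (c : F) (u v : H), lam n (c *: u + v) = c * lam n u + lam n v).
Notation J := (J_submodule p a one lam).
Local Notation model := (model_mode p form ell lam).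

Let a_heis : heis_module form ell a. Proof. by case: V_induced. Qed.
Let a_vac : forall u (n : int), 0 <= n -> a u n one = 0. Proof. by case: V_induced. Qed.

Lemma model_map_exists : exists f : V -> coeffs F (\dim (fullv : {vspace H})),
  (forall u M, f (iter p (a u (- M.+1%:Z)) one) = lam M.+1 u ^+ p *: @vac F _)
  /\ (forall x, J x -> f x = 0).
Proof.
case: V_induced => _ _ V_univ.
have model_heis := model_heis ell p_prime p_char form_nondeg lam_linear.
have [f [f_lin f1 f_mode _]] := V_univ _ _ _ model_heis (model_mode_vac p form ell lam).
have fD : {morph f : x y / x + y} by move=> x y; rewrite -{1}[x]scale1r f_lin scale1r.
have fZ c x : f (c *: x) = c *: f x by rewrite -[c *: x]addr0 f_lin (morphD0 fD) addr0.
have fB x c : f (x - c *: one) = f x - c *: @vac F _.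
  by rewrite fD -scaleNr fZ f1 scaleNr.
have f_iter u M k :
    f (iter k (a u (- M.+1%:Z)) one) = iter k (model u (Negz M)) (@vac F _).
  by elim: k => //= k <-; rewrite f_mode.
exists f; split=> [u M|]; first by rewrite f_iter iter_model_mode_vac.
apply: (J_submodule_ind (S := fun x => f x = 0)).
- split=> [|x y fx fy|c x fx]; [exact: morphD0 fD | by rewrite fD fx fy addr0 |].
  by rewrite fZ fx scaler0.
- by move=> u n y fy; rewrite f_mode fy (heis0 model_heis).
move=> y [[u [m [m_gt0 ->]]] | [u [n [n_gt0 pn ->]]]]; rewrite fB.
  case: m m_gt0 => // M _.
  by rewrite f_iter (iter_model_mode_vac form ell lam p_prime p_char); exact: subrr.
by case: n n_gt0 pn => // M _ pM; rewrite f_mode f1 model_mode_vac_pdvd ?subrr.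
Qed.

Hypothesis J_ideal : is_ideal Y J.

Lemma J_iter_mode u M : J (iter p (a u (- M.+2%:Z)) one).
Proof.
have J_gen1 : J (iter p (a u (- 1%:Z)) one - lam 1 u ^+ p *: one).
  by apply: mem_J_gen; left; exists u, 1%N.
have [k Dk] : exists k, (p * M.+1 = k.+1)%N.
  by exists (p * M.+1).-1; rewrite prednK // muln_gt0 prime_gt0.
have := (J_ideal.2 one _ (- k.+1%:Z - 1) J_gen1).2.
rewrite -/(Dpow Y one _ k.+1) (Dpow_subr_vacuum V_va) -Dk.
rewrite (Dpow_iter_pchar a_heis a_vac V_va Y_mode p_prime p_char) dvdn_mulr //.
by rewrite mulKn ?prime_gt0 // add0n binn expr1n scale1r add1n.
Qed.

Lemma lam_vanish_of_ideal u n : (2 <= n)%N -> lam n u = 0.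
Proof.
case: n => [|[|M]] // _; have [f [f_iter fJ]] := model_map_exists.
have /eqP := fJ _ (J_iter_mode u M).
by rewrite f_iter scaler_eq0 (negbTE (vac_neq0 _ _)) orbF expf_eq0 => /andP[_ /eqP].
Qed.

End IdealForcesVanishing.

Theorem proposition5
  (F : fieldType) (p : nat) (Hp : prime p) (HpF : p \in [pchar F])
  (H : vectType F) (form : H -> H -> F) (Hform : nondeg_sym_bilinear form)
  (ell : F)
  (V : lmodType F) (a : H -> int -> V -> V) (one : V)
  (HV : induced_vacuum_module form ell a one)
  (Y : V -> int -> V -> V) (HY : vertex_algebra Y one)
  (HYh : forall (u : H) (n : int) (w : V), Y (a u (-1) one) n w = a u n w)
  (lam : nat -> H -> F)
  (Hlam : forall n : nat, (0 < n)%N ->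
     forall (c : F) (u v : H), lam n (c *: u + v) = c * lam n u + lam n v) :
  is_ideal Y (J_submodule p a one lam)
  <-> (forall (u : H) (n : nat), (2 <= n)%N -> lam n u = 0).
Proof.
split=> [J_ideal | lam_vanish].
  exact: (lam_vanish_of_ideal HV HY HYh Hp HpF Hform Hlam J_ideal).
exact: (is_ideal_J HV HY HYh Hp HpF lam_vanish).
Qed.
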